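(* Let $K_1,\dots,K_n\subset\mathbb R^d$ be convex bodies such that $K:=K_1\cap\dots\cap K_n$ satisfies $\dim(K)<d$. Suppose $x\in K$ lies in the boundary of every $K_i$, $i=1,\dots,n$. Then there exist nonempty finite collections of closed half-spaces $\{H^+(i,j)\}_{j\in J_i}$, $i=1,\dots,n$, such that for all $i$ and $j\in J_i$ the boundary hyperplane of $H^+(i,j)$ is a supporting hyperplane of $K_i$ at $x$ (with $K_i\subset H^+(i,j)$), and $$\dim\Big(\bigcap_{j\in J_1}H^+(1,j)\cap\dots\cap\bigcap_{j\in J_n}H^+(n,j)\Big)<d.$$
   Context: A convex body is a nonempty compact convex subset of $\mathbb R^d$; the dimension of a convex set is the dimension of its affine hull. *)

From HB Require Import structures.
From mathcomp Require Import all_boot all_order all_algebra.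
From mathcomp Require Import all_classical all_reals all_analysis.
Set Implicit Arguments. Unset Strict Implicit. Unset Printing Implicit Defensive.
Import Order.TTheory GRing.Theory Num.Theory.
Import numFieldNormedType.Exports.
Local Open Scope classical_set_scope.
Local Open Scope ring_scope.

(* Euclidean space R^d is modelled as row vectors 'rV[R]_d (R : realType),
   with the product/normed topology of mathcomp-analysis. *)

Section Defs.
Variables (R : realType) (d : nat).
Local Notation V := 'rV[R]_d.

Definition dotp (u v : V) : R := (u *m v^T) 0 0.

Definition convex_set (A : set V) : Prop :=
  forall u v t, A u -> A v -> 0 <= t -> t <= 1 -> A (t *: u + (1 - t) *: v).

Definition convex_body (A : set V) : Prop :=
  A !=set0 /\ compact A /\ convex_set A.

Definition boundary (A : set V) : set V := closure A `\` A°.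

(* dimension of the affine hull of A: the dimension of the linear span of
   the difference vectors y - x (x, y in A); it is the largest dimension of
   the span of a finite family of such differences (bounded by d). *)
Definition diffs_of (A : set V) (s : seq V) : Prop :=
  forall v, v \in s -> exists x y, A x /\ A y /\ v = y - x.

Definition affdim (A : set V) : nat :=
  \big[maxn/0%N]_(k < d.+1 | `[< exists s, diffs_of A s /\ \dim (span s) = k >]) k.

Definition halfspace (h : V * R) : set V := [set y | dotp h.1 y <= h.2].

Definition supporting_halfspace (A : set V) (x : V) (h : V * R) : Prop :=
  h.1 != 0 /\ A `<=` halfspace h /\ dotp h.1 x = h.2.

End Defs.

From Pilot Require Import Defs.
From HB Require Import structures.
From mathcomp Require Import all_boot all_order all_algebra.
From mathcomp Require Import all_classical all_reals all_analysis.
From mathcomp Require Import ring lra.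
Import Order.TTheory GRing.Theory Num.Theory.
Import numFieldNormedType.Exports.
Local Open Scope classical_set_scope.
Local Open Scope ring_scope.
Set Implicit Arguments. Unset Strict Implicit. Unset Printing Implicit Defensive.

(* Put D = {(y - y', y - (w,...,w)) : y, y' in K_1 x ... x K_n, w in K_1}, a compact
   convex subset of R^(nd) x R^(nd) containing 0.  If 0 were interior to D, every
   K_i - K_i would contain a ball, hence every K_i would contain a ball, and the
   second component would then yield a ball inside K_1 /\ ... /\ K_n, contradicting
   dim K < d.  So D has a supporting hyperplane at 0: some (a, b) <> 0 satisfies
   sum_i <a_i, y_i - y'_i> + <b_i, y_i - w> <= 0 on D.  Specialising y, y', w shows
   that -a_i and a_i + b_i are outer normals of K_i at x, and -sum_i b_i one of K_1.
   These normals sum to 0 and are not all 0, so on the intersection of the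
   half-spaces they define every <u, y - x> vanishes: the intersection lies in a
   hyperplane.  One extra supporting half-space per K_i (x is a boundary point)
   makes every family nonempty. *)
Section InnerProduct.
Variables (R : realType) (N : nat).
Implicit Types u v w : 'rV[R]_N.

Lemma dotpE u v : dotp u v = \sum_j u 0 j * v 0 j.
Proof. by rewrite /dotp mxE; apply: eq_bigr => j _; rewrite mxE. Qed.

Lemma dotpC u v : dotp u v = dotp v u.
Proof. by rewrite !dotpE; apply: eq_bigr => j _; rewrite mulrC. Qed.

Lemma dotpDl u v w : dotp (u + v) w = dotp u w + dotp v w.
Proof. by rewrite /dotp mulmxDl mxE. Qed.

Lemma dotpZl a u w : dotp (a *: u) w = a * dotp u w.
Proof. by rewrite /dotp -scalemxAl mxE. Qed.

Lemma dotpNl u w : dotp (- u) w = - dotp u w.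
Proof. by rewrite -scaleN1r dotpZl mulN1r. Qed.

Lemma dotpDr u v w : dotp w (u + v) = dotp w u + dotp w v.
Proof. by rewrite dotpC dotpDl !(dotpC w). Qed.

Lemma dotpZr a u w : dotp w (a *: u) = a * dotp w u.
Proof. by rewrite dotpC dotpZl dotpC. Qed.

Lemma dotpNr u w : dotp w (- u) = - dotp w u.
Proof. by rewrite !(dotpC w) dotpNl. Qed.

Lemma dotpBr u v w : dotp w (u - v) = dotp w u - dotp w v.
Proof. by rewrite dotpDr dotpNr. Qed.

Lemma dotp_sqrD u v :
  dotp (u + v) (u + v) = dotp u u + 2 * dotp u v + dotp v v.
Proof. by rewrite !dotpDl !dotpDr (dotpC v u); ring. Qed.

Lemma dotp0l w : dotp 0 w = 0.
Proof. by rewrite /dotp mul0mx mxE. Qed.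

Lemma dotp0r w : dotp w 0 = 0.
Proof. by rewrite dotpC dotp0l. Qed.

Lemma dotp_suml I (r : seq I) (P : pred I) (F : I -> 'rV[R]_N) w :
  dotp (\sum_(i <- r | P i) F i) w = \sum_(i <- r | P i) dotp (F i) w.
Proof. exact: (big_morph _ (fun u v => dotpDl u v w) (dotp0l w)). Qed.

Lemma dotp_sumr I (r : seq I) (P : pred I) (F : I -> 'rV[R]_N) w :
  dotp w (\sum_(i <- r | P i) F i) = \sum_(i <- r | P i) dotp w (F i).
Proof. exact: (big_morph _ (fun u v => dotpDr u v w) (dotp0r w)). Qed.

Lemma dotpp_ge0 u : 0 <= dotp u u.
Proof. by rewrite dotpE sumr_ge0 // => j _; rewrite -expr2 sqr_ge0. Qed.

Lemma dotpp_gt0 u : u != 0 -> 0 < dotp u u.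
Proof.
move=> u0; rewrite lt_def dotpp_ge0 andbT; apply: contra u0.
rewrite dotpE psumr_eq0 => [/allP u0|j _]; last by rewrite -expr2 sqr_ge0.
apply/eqP/rowP => j; rewrite mxE; apply/eqP.
by rewrite -sqrf_eq0 expr2; apply: u0; rewrite mem_index_enum.
Qed.

Lemma coord_le_norm u j : `|u 0 j| <= `|u|.
Proof.
rewrite [leRHS]/Num.norm /= mx_normrE.
by apply/bigmax_geP; right => /=; exists (0, j).
Qed.

Lemma norm_le_coord u M : 0 <= M -> (forall j, `|u 0 j| <= M) -> `|u| <= M.
Proof.
move=> M0 uM; rewrite [leLHS]/Num.norm /= mx_normrE.
elim/big_ind: _ => // [a b aM bM|[i j] _]; first by rewrite ge_max aM bM.
by rewrite (ord1 i).
Qed.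

Lemma norm_dotp_le u v : `|dotp u v| <= N%:R * (`|u| * `|v|).
Proof.
rewrite dotpE (le_trans (ler_norm_sum _ _ _)) //.
rewrite -[N in N%:R]card_ord -sum1_card natr_sum mulr_suml.
apply: ler_sum => j _; rewrite mul1r normrM.
by apply: ler_pM => //; apply: coord_le_norm.
Qed.

End InnerProduct.

Section CoordinatewiseContinuity.
Variables (R : realType) (X : topologicalType).

Lemma continuous_mx p q (f : X -> 'M[R]_(p, q)) :
  (forall i j, continuous (fun x => f x i j)) -> continuous f.
Proof.
move=> fc x A /= [B nB BA].
have : \forall y \near x, forall i j, B i j (f y i j).
  by apply: filter_forall => i; apply: filter_forall => j; exact: fc.
by apply: filterS => y By; apply: BA.
Qed.

Lemma continuous_coord p q (f : X -> 'M[R]_(p, q)) i j :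
  continuous f -> continuous (fun x => f x i j).
Proof.
by move=> fc x; apply: (@continuous_comp _ _ _ f (fun M : 'M[R]_(p, q) => M i j));
  [exact: fc | exact: coord_continuous].
Qed.

Lemma continuous_dotp N (f g : X -> 'rV[R]_N) :
  continuous f -> continuous g -> continuous (fun x => dotp (f x) (g x)).
Proof.
move=> fc gc; have -> : (fun x => dotp (f x) (g x)) =
    fun x => \sum_j f x 0 j * g x 0 j by apply: funext => x; rewrite dotpE.
apply: continuous_big => [|j _ x]; first exact: add_continuous.
by apply: continuousM; exact: continuous_coord.
Qed.

End CoordinatewiseContinuity.

Definition normal_cone (R : realType) N (C : set 'rV[R]_N) (x : 'rV[R]_N) :=
  [set u : 'rV[R]_N | forall y, C y -> dotp u y <= dotp u x].

Lemma supporting_halfspace_normal (R : realType) N (C : set 'rV[R]_N) x u :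
  u != 0 -> normal_cone C x u -> supporting_halfspace C x (u, dotp u x).
Proof. by move=> u0 Cu; split; [|split]. Qed.

Section SupportingHyperplane.
Variables (R : realType) (N : nat).
Implicit Types (C : set 'rV[R]_N) (a c p x : 'rV[R]_N).

Lemma nearest_point_obtuse C p c : Defs.convex_set C -> C c ->
  (forall z, C z -> dotp (c - p) (c - p) <= dotp (z - p) (z - p)) ->
  forall y, C y -> dotp (p - c) (y - c) <= 0.
Proof.
move=> convC Cc cmin y Cy; rewrite leNgt; apply/negP => dl_gt0.
set w := y - c in dl_gt0 *; set dl := dotp (p - c) w in dl_gt0 *.
set s := dotp w w; have s_ge0 : 0 <= s := dotpp_ge0 w.
(* for this t the increase t^2 s - 2 t dl of the squared distance is negative *)
set t := dl / (s + dl).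
have sdl_gt0 : 0 < s + dl by rewrite ltr_wpDl.
have t_gt0 : 0 < t by rewrite divr_gt0.
have t_le1 : t <= 1 by rewrite ler_pdivrMr // mul1r lerDr.
have ts : t * s = dl - t * dl.
  have tsdl : t * (s + dl) = dl by rewrite /t mulfVK ?gt_eqF.
  by rewrite -{1}tsdl mulrDr addrK.
have := cmin _ (convC y c t Cy Cc (ltW t_gt0) t_le1).
have -> : t *: y + (1 - t) *: c - p = (c - p) + t *: w.
  by apply/rowP => j; rewrite !mxE; ring.
rewrite (dotp_sqrD (c - p)) dotpZl !dotpZr -/s -opprB !dotpNl -/dl.
have : t * (t * s) = t * dl - t * (t * dl) by rewrite ts mulrBr.
have : 0 < t * (t * dl) by do 2 apply: mulr_gt0 => //.
have : 0 < t * dl by rewrite mulr_gt0.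
lra.
Qed.

Lemma separate_point C p : C !=set0 -> compact C -> Defs.convex_set C -> ~ C p ->
  exists a, forall y, C y -> dotp a y < dotp a p.
Proof.
move=> C0 cC convC Cp.
have dist_cont : continuous (fun y : 'rV[R]_N => dotp (y - p) (y - p)).
  have sub_cont : continuous (fun y : 'rV[R]_N => y - p).
    by move=> y; apply: continuousB; [exact: cvg_id | exact: cst_continuous].
  exact: continuous_dotp.
have [c /set_mem Cc cmin] := compact_EVT_min C0 cC (continuous_subspaceT dist_cont).
have pc : p - c != 0 by rewrite subr_eq0; apply: contraPneq Cp => ->.
exists (p - c) => y Cy.
have := nearest_point_obtuse convC Cc (fun z Cz => cmin z (mem_set Cz)) Cy.
have := dotpp_gt0 pc; rewrite !dotpBr; lra.
Qed.

Lemma near_support C x e :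
  compact C -> Defs.convex_set C -> C x -> ~ nbhs x C -> 0 < e ->
  exists a, `|a| = 1 /\ forall y, C y -> dotp a y <= dotp a x + e.
Proof.
move=> cC convC Cx nCx e0.
pose r := e / (N%:R + 1).
have N1 : 0 < N%:R + 1 :> R by rewrite ltr_wpDl.
have r0 : 0 < r by rewrite divr_gt0.
have [p xp Cp] : exists2 p, `|p - x| < r & ~ C p.
  apply: contrapT => noP; apply: nCx; apply/nbhs_ballP; exists r => // p.
  by rewrite -ball_normE /= distrC => xp; apply: contrapT => Cp; apply: noP; exists p.
have [b Hb] := separate_point (ex_intro _ x Cx) cC convC Cp.
have b0 : 0 < `|b|.
  by rewrite normr_gt0; apply: contraTneq (Hb x Cx) => ->; rewrite !dotp0l ltxx.
exists ((`|b|)^-1 *: b); split; first by rewrite normrZ normfV normr_id mulVf ?gt_eqF.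
move=> y Cy; rewrite !dotpZl -(ler_pM2l b0) mulrDr !mulrA mulfV ?gt_eqF // !mul1r.
have bp : dotp b p - dotp b x <= N%:R * (`|b| * r).
  rewrite -dotpBr (le_trans (ler_norm _) (le_trans (norm_dotp_le _ _) _)) //.
  by rewrite ler_wpM2l // ler_wpM2l // ltW.
have Nr : N%:R * r <= e by rewrite /r mulrA ler_pdivrMr // mulrDr mulr1 mulrC lerDl ltW.
have := Hb y Cy; have := ler_wpM2l (ltW b0) Nr; rewrite mulrCA; lra.
Qed.

Lemma support_hyperplane C x :
  compact C -> Defs.convex_set C -> C x -> ~ nbhs x C ->
  exists2 a, a != 0 & normal_cone C x a.
Proof.
move=> cC convC Cx nCx.
pose sphere := [set a : 'rV[R]_N | `|a| = 1].
pose E (k : nat) := [set a : 'rV[R]_N | forall y, C y -> dotp a (y - x) <= k.+1%:R^-1].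
have cS : compact sphere.
  apply: bounded_closed_compact.
    by exists 1; split => // M M1 a /= ->; exact: ltW.
  apply: (@preimage_closed _ _ (fun a : 'rV[R]_N => `|a|) (eq^~ 1)).
    by move=> a _; exact: norm_continuous.
  exact: closed_eq.
have closedE k : closed (E k).
  have -> : E k = \bigcap_(y in C) [set a | dotp a (y - x) <= k.+1%:R^-1] by [].
  apply: closed_bigI => y _.
  apply: (@preimage_closed _ _ (fun a => dotp a (y - x)) [set r | r <= k.+1%:R^-1]);
    last exact: closed_le.
  move=> a _; apply: (@continuous_dotp _ _ _ id (fun=> y - x)) => b.
    exact: cvg_id.
  exact: cst_continuous.
have EE k a : E k a <-> forall y, C y -> dotp a y <= dotp a x + k.+1%:R^-1.
  by split=> Ea y Cy; have := Ea y Cy; rewrite dotpBr lerBlDl.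
move: cS; rewrite compact_In0 => /(_ nat setT (fun k => sphere `&` E k)) [].
- by exists E.
- move=> D _; set k := \max_(i <- finmap.enum_fset D) i.
  have k_gt0 : 0 < k.+1%:R^-1 :> R by rewrite invr_gt0.
  have [a [Sa Ea]] := near_support cC convC Cx nCx k_gt0.
  exists a => i Di; split => //; apply/EE => y Cy.
  apply: (le_trans (Ea y Cy)); rewrite lerD2l lef_pV2 ?posrE // ler_nat ltnS.
  exact: leq_bigmax_seq.
- move=> a Ea; exists a.
    by have [/= Sa _] := Ea 0%N I; rewrite -normr_gt0 Sa.
  move=> y Cy; rewrite leNgt; apply/negP => /ltr_add_invr [k].
  have [_ /EE Ek] := Ea k I.
  by move=> /lt_le_trans /(_ (Ek y Cy)); rewrite ltxx.
Qed.

End SupportingHyperplane.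

Section ConvexBalls.
Variable R : realType.

Lemma norm_delta_le1 N (k : 'I_N) : `|'e_k : 'rV[R]_N| <= 1.
Proof.
by apply: norm_le_coord => // j; rewrite mxE; case: (_ && _); rewrite ?normr1 ?normr0.
Qed.

Lemma convex_avg N (C : set 'rV[R]_N) m (f : 'I_m.+1 -> 'rV[R]_N) :
  Defs.convex_set C -> (forall k, C (f k)) -> C (m.+1%:R^-1 *: \sum_k f k).
Proof.
move=> convC; elim: m f => [|m IHm] f Cf; first by rewrite big_ord1 invr1 scale1r.
set t : R := m.+1%:R / m.+2%:R.
have t_ge0 : 0 <= t by rewrite divr_ge0.
have t_le1 : t <= 1 by rewrite ler_pdivrMr ?mul1r ?ler_nat.
set g := fun i : 'I_m.+1 => f (widen_ord (leqnSn m.+1) i).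
suff -> : m.+2%:R^-1 *: \sum_k f k = t *: (m.+1%:R^-1 *: \sum_i g i) + (1 - t) *: f ord_max.
  exact: convC (IHm g (fun=> Cf _)) (Cf ord_max) t_ge0 t_le1.
have m1 : m%:R + 1 != 0 :> R by rewrite natr1 pnatr_eq0.
have m2 : m%:R + 1 + 1 != 0 :> R by rewrite !natr1 pnatr_eq0.
rewrite big_ord_recr scalerDr scalerA.
by congr (_ *: _ + _ *: _); rewrite /t -!natr1; field; rewrite ?m1 ?m2.
Qed.

Lemma convex_ball_shrink N (C : set 'rV[R]_N) (c y : 'rV[R]_N) r t :
  Defs.convex_set C -> C y -> (forall w, `|w - c| < r -> C w) -> 0 < t -> t <= 1 ->
  forall w, `|w - (t *: c + (1 - t) *: y)| < t * r -> C w.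
Proof.
move=> convC Cy ball_c t_gt0 t_le1 w wr.
set c' := c + t^-1 *: (w - (t *: c + (1 - t) *: y)).
have Cc' : C c'.
  apply: ball_c; rewrite /c' addrC addKr normrZ gtr0_norm ?invr_gt0 //.
  by rewrite ltr_pdivrMl.
suff <- : t *: c' + (1 - t) *: y = w by apply: convC => //; exact: ltW.
by apply/rowP => j; rewrite !mxE; field; rewrite gt_eqF.
Qed.

Lemma convex_cross_ball d (C : set 'rV[R]_d.+1) c rho :
  Defs.convex_set C -> 0 < rho ->
  (forall k, C (c + rho *: 'e_k) /\ C (c - rho *: 'e_k)) ->
  forall w, `|w - c| < rho / d.+1%:R -> C w.
Proof.
move=> convC rho_gt0 Cc w wc.
set D : R := d.+1%:R; have D_gt0 : 0 < D by rewrite ltr0n.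
pose s k := D * (w - c) 0 k.
have Cs k : C (c + s k *: 'e_k).
  have /andP [s_ge s_le] : - rho <= s k <= rho.
    rewrite -ler_norml /s normrM gtr0_norm // -ler_pdivlMl // mulrC.
    exact: le_trans (coord_le_norm _ _) (ltW wc).
  pose t := (rho + s k) / (2 * rho).
  have t_ge0 : 0 <= t by apply: divr_ge0; [lra | rewrite mulr_ge0 // ltW].
  have t_le1 : t <= 1 by rewrite ler_pdivrMr ?mulr_gt0 //; lra.
  have [Cp Cm] := Cc k; have := convC _ _ t Cp Cm t_ge0 t_le1.
  suff -> : t *: (c + rho *: 'e_k) + (1 - t) *: (c - rho *: 'e_k) = c + s k *: 'e_k by [].
  by apply/rowP => j; rewrite !mxE /t; field; rewrite gt_eqF.
have := convex_avg convC Cs; congr C.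
rewrite big_split /= sumr_const card_ord -[c *+ _]scaler_nat -/D.
have -> : \sum_k s k *: 'e_k = D *: (w - c).
  rewrite [in RHS](row_sum_delta (w - c)) scaler_sumr.
  by apply: eq_bigr => k _; rewrite scalerA.
by rewrite -scalerDr addrC subrK scalerA mulVf ?gt_eqF // scale1r.
Qed.

Lemma convex_ball_of_diff_ball N (C : set 'rV[R]_N) e :
  Defs.convex_set C -> 0 < e ->
  (forall u : 'rV[R]_N, `|u| < e -> exists y y', [/\ C y, C y' & u = y - y']) ->
  exists c r, 0 < r /\ forall w, `|w - c| < r -> C w.
Proof.
case: N C => [|d] C convC e_gt0 diffs.
  have [|y [_ [Cy _ _]]] := diffs 0; first by rewrite normr0.
  by exists y, 1; split => // w _; rewrite (_ : w = y) //; apply/rowP => -[].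
set D : R := d.+1%:R; have D_gt0 : 0 < D by rewrite ltr0n.
have e2_gt0 : 0 < e / 2 by rewrite divr_gt0.
have /choice [pq Hpq] : forall k : 'I_d.+1, exists pq : 'rV[R]_d.+1 * 'rV[R]_d.+1,
    [/\ C pq.1, C pq.2 & (e / 2) *: 'e_k = pq.1 - pq.2].
  move=> k; have [|y [y' [Cy Cy' E]]] := diffs ((e / 2) *: 'e_k); last by exists (y, y').
  rewrite normrZ gtr0_norm // (le_lt_trans (ler_wpM2l (ltW e2_gt0) (norm_delta_le1 k))) //.
  by rewrite mulr1 ltr_pdivrMr // ltr_pMr // ltr1n.
pose m k := 2^-1 *: (pq k).1 + (1 - 2^-1) *: (pq k).2.
have Cm k : C (m k).
  by have [Cp Cq _] := Hpq k; apply: convC; rewrite ?invr_ge0 ?invf_le1 ?ler1n.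
(* c averages the midpoints m k; trading m k for an endpoint moves it by +-e/(4D) along e_k *)
pose c := D^-1 *: \sum_k m k.
have swap_one k z : C z -> C (c + D^-1 *: (z - m k)).
  move=> Cz; have CF l : C (if l == k then z else m l) by case: ifP.
  have := convex_avg convC CF; congr C.
  rewrite /c (bigD1 k) //= eqxx (eq_bigr m) => [|l /negPf -> //].
  by rewrite [in RHS](bigD1 k) //= -scalerDr addrAC addrCA subrr addr0.
exists c, (e / (4 * D) / D); split; first by rewrite !divr_gt0 ?mulr_gt0.
apply: convex_cross_ball => [//||k]; first by rewrite !divr_gt0 ?mulr_gt0.
have [Cp Cq E] := Hpq k.
have pm : (pq k).1 - m k = 2^-1 *: ((pq k).1 - (pq k).2).
  by apply/rowP => j; rewrite !mxE; field.
have qm : (pq k).2 - m k = - 2^-1 *: ((pq k).1 - (pq k).2).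
  by apply/rowP => j; rewrite !mxE; field.
split; [have := swap_one k _ Cp | have := swap_one k _ Cq]; congr (C (c + _));
  rewrite ?pm ?qm -E !scalerA -?[- (_ *: 'e_k)]scaleNr; congr (_ *: _);
  field; exact: lt0r_neq0.
Qed.

End ConvexBalls.

Lemma dim_rV_full (R : fieldType) n : \dim (fullv : {vspace 'rV[R]_n}) = n.
Proof. by rewrite dimvf /dim /= mul1n. Qed.

Lemma sumr_npos_eq0P (R : numDomainType) (I : eqType) (r : seq I) (F : I -> R) :
  (forall i, i \in r -> F i <= 0) -> \sum_(i <- r) F i = 0 ->
  forall i, i \in r -> F i = 0.
Proof.
move=> F_le0 /eqP; rewrite -oppr_eq0 -sumrN big_seq psumr_eq0 => [/allP F0 i ri|i ri].
  by apply/eqP; rewrite -oppr_eq0; move/implyP: (F0 i ri); apply.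
by rewrite oppr_ge0 F_le0.
Qed.

Section AffineDimension.
Variables (R : realType) (d : nat).
Implicit Types (A B : set 'rV[R]_d).

Lemma le_affdim A B : A `<=` B -> (affdim A <= affdim B)%N.
Proof.
move=> AB; rewrite /affdim; apply/bigmax_leqP => k /asboolP [s [As sk]].
apply: leq_bigmax_cond; apply/asboolP; exists s; split => //.
by move=> v /As [x [y [/AB Bx [/AB By ->]]]]; exists x, y.
Qed.

Lemma affdim_ball A c r :
  0 < r -> (forall w, `|w - c| < r -> A w) -> (d <= affdim A)%N.
Proof.
move=> r_gt0 ball_c.
pose s := [seq (r / 2) *: ('e_k : 'rV[R]_d) | k <- enum 'I_d].
have r2_gt0 : 0 < r / 2 by rewrite divr_gt0.
have As : diffs_of A s.
  move=> v /mapP [k _ ->]; exists c, (c + (r / 2) *: 'e_k).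
  split; [|split; last by rewrite addrC addKr]; apply: ball_c; first by rewrite subrr normr0.
  rewrite addrC addKr normrZ gtr0_norm //.
  rewrite (le_lt_trans (ler_wpM2l (ltW r2_gt0) (norm_delta_le1 _ k))) //.
  by rewrite mulr1 ltr_pdivrMr // ltr_pMr // ltr1n.
have sfull : span s = fullv.
  apply/vspaceP => v; rewrite memvf [v]row_sum_delta; apply: memv_suml => k _.
  rewrite -[v 0 k](mulfVK (lt0r_neq0 r2_gt0)) -scalerA.
  by apply/memvZ/memv_span/map_f; rewrite mem_enum.
apply: (@leq_bigmax_cond _ (fun k : 'I_d.+1 => _) _ ord_max); apply/asboolP.
by exists s; rewrite sfull dim_rV_full.
Qed.

Lemma affdim_hyperplane A a b : a != 0 -> (forall y, A y -> dotp a y = b) ->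
  (affdim A < d)%N.
Proof.
case: d A a => [|d'] A a a0 Ab.
  by move: a0; rewrite (_ : a = 0) ?eqxx //; apply/rowP => -[].
rewrite ltnS /affdim; apply/bigmax_leqP => k /asboolP [s [As sk]].
have := ltn_ord k; rewrite ltnS leq_eqVlt => /predU1P [k_full|//]; exfalso.
have sfull : span s = fullv.
  by apply/eqP; rewrite eqEdim subvf sk k_full dim_rV_full leqnn.
have a_ortho v : v \in span s -> dotp a v = 0.
  move=> vs; rewrite (@coord_span _ _ _ (in_tuple s) v vs) dotp_sumr big1 // => i _.
  rewrite dotpZr.
  have /As [x [y [Ax [Ay ->]]]] : (in_tuple s)`_i \in s by rewrite mem_nth.
  by rewrite dotpBr !Ab // subrr mulr0.
by have := dotpp_gt0 a0; rewrite a_ortho ?sfull ?memvf // ltxx.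
Qed.

Lemma affdim_balanced_normals n (x : 'rV[R]_d) (vs : 'I_n -> seq 'rV[R]_d) i0 v0 :
  \sum_i \sum_(u <- vs i) u = 0 -> v0 \in vs i0 -> v0 != 0 ->
  (affdim [set y | forall i u, u \in vs i -> (dotp u y <= dotp u x)%R] < d)%N.
Proof.
move=> vs_sum0 v0_in v0_neq0.
apply: (affdim_hyperplane (b := dotp v0 x) v0_neq0) => y cone_y.
have slack_le0 i u : u \in vs i -> dotp u (y - x) <= 0.
  by move=> u_in; rewrite dotpBr subr_le0; exact: (cone_y i u u_in).
have slack_sum : \sum_i \sum_(u <- vs i) dotp u (y - x) = 0.
  rewrite -[RHS](dotp0l (y - x)) -vs_sum0 dotp_suml.
  by apply: eq_bigr => i _; rewrite dotp_suml.
have inner0 i : \sum_(u <- vs i) dotp u (y - x) = 0.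
  apply: (sumr_npos_eq0P _ slack_sum) => [j _|]; last exact: mem_index_enum.
  by rewrite big_seq sumr_le0 // => u; apply: slack_le0.
apply/eqP; rewrite -subr_eq0 -dotpBr; apply/eqP.
by apply: (sumr_npos_eq0P _ (inner0 i0)) => // u; apply: slack_le0.
Qed.

End AffineDimension.

Section BlockVectors.
Variables (R : realType) (n d : nat).
Implicit Types (Y Z : 'rV[R]_(n * d)) (f : 'I_n -> 'rV[R]_d).

Definition blk (i : 'I_n) Y : 'rV[R]_d := row i (vec_mx Y).
Definition pack f : 'rV[R]_(n * d) := mxvec (\matrix_i f i).

Lemma blk_coord i Y j : blk i Y 0 j = Y 0 (mxvec_index i j).
Proof. by rewrite !mxE. Qed.

Lemma blk_pack f i : blk i (pack f) = f i.
Proof. by rewrite /blk /pack mxvecK rowK. Qed.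

Lemma pack_coord f i j : pack f 0 (mxvec_index i j) = f i 0 j.
Proof. by rewrite -blk_coord blk_pack. Qed.

Lemma blkB i Y Z : blk i (Y - Z) = blk i Y - blk i Z.
Proof. by rewrite /blk !linearB. Qed.

Lemma blk0 i : blk i 0 = 0.
Proof. by rewrite /blk !linear0. Qed.

Lemma blk_inj Y Z : (forall i, blk i Y = blk i Z) -> Y = Z.
Proof. by move=> YZ; apply: (can_inj vec_mxK); apply/row_matrixP. Qed.

Lemma dotp_blk Y Z : dotp Y Z = \sum_i dotp (blk i Y) (blk i Z).
Proof.
rewrite dotpE (reindex (fun p : 'I_n * 'I_d => mxvec_index p.1 p.2)) /=.
  rewrite -(pair_bigA _ (fun i j => Y 0 (mxvec_index i j) * Z 0 (mxvec_index i j))).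
  by apply: eq_bigr => i _; rewrite dotpE; apply: eq_bigr => j _; rewrite !blk_coord.
exists (fun k => enum_val (cast_ord (esym (mxvec_cast n d)) k)) => [[i j] _ | k _] /=.
  by rewrite /mxvec_index cast_ordK enum_rankK.
by case/mxvec_indexP: k => i j /=; rewrite /mxvec_index cast_ordK enum_rankK.
Qed.

Lemma norm_pack_le f M : 0 <= M -> (forall i, `|f i| <= M) -> `|pack f| <= M.
Proof.
move=> M0 fM; apply: norm_le_coord => // k; case/mxvec_indexP: k => i j.
by rewrite pack_coord; apply: le_trans (coord_le_norm _ _) (fM i).
Qed.

Lemma continuous_blk (X : topologicalType) i (g : X -> 'rV[R]_(n * d)) :
  continuous g -> continuous (fun x => blk i (g x)).
Proof.
move=> gc; apply: continuous_mx => i' j; rewrite (ord1 i').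
by under eq_fun do rewrite blk_coord; exact: continuous_coord.
Qed.

Lemma continuous_pack_const (X : topologicalType) (g : X -> 'rV[R]_d) :
  continuous g -> continuous (fun x => pack (fun=> g x)).
Proof.
move=> gc; apply: continuous_mx => i' k; rewrite (ord1 i'); case/mxvec_indexP: k => i j.
by under eq_fun do rewrite pack_coord; exact: continuous_coord.
Qed.

End BlockVectors.

Section RowBlocks.
Variables (R : realType) (p q : nat).

Lemma dotp_row_mx (u u' : 'rV[R]_p) (v v' : 'rV[R]_q) :
  dotp (row_mx u v) (row_mx u' v') = dotp u u' + dotp v v'.
Proof. by rewrite /dotp tr_row_mx mul_row_col mxE. Qed.

Lemma norm_row_mx_le (u : 'rV[R]_p) (v : 'rV[R]_q) M :
  `|u| <= M -> `|v| <= M -> `|row_mx u v| <= M.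
Proof.
move=> uM vM; apply: norm_le_coord => [|j]; first exact: le_trans (normr_ge0 _) uM.
rewrite mxE; case: (fintype.split j) => k.
  exact: le_trans (coord_le_norm _ _) uM.
exact: le_trans (coord_le_norm _ _) vM.
Qed.

Lemma continuous_row_mx (X : topologicalType) (f : X -> 'rV[R]_p) (g : X -> 'rV[R]_q) :
  continuous f -> continuous g -> continuous (fun x => row_mx (f x) (g x)).
Proof.
move=> fc gc; apply: continuous_mx => i j; rewrite (ord1 i).
case: (splitP j) => k jk.
  have -> : j = lshift q k by exact: val_inj.
  by under eq_fun do rewrite row_mxEl; exact: continuous_coord.
have -> : j = rshift p k by exact: val_inj.
by under eq_fun do rewrite row_mxEr; exact: continuous_coord.
Qed.

End RowBlocks.

Section DifferenceBody.
Variables (R : realType) (d m : nat) (K : 'I_m.+1 -> set 'rV[R]_d) (x : 'rV[R]_d).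
Hypotheses (K_compact : forall i, compact (K i))
  (K_convex : forall i, Defs.convex_set (K i)) (Kx : forall i, K i x).

Local Notation n := m.+1.
Local Notation V := 'rV[R]_d.
Local Notation P := 'rV[R]_(n * d).

Definition Kprod := [set Y : P | forall i, K i (blk i Y)].
Definition diff_dom := Kprod `*` (Kprod `*` K ord0).
(* diff_body is the set D of the proof idea, with K_1 = K ord0 *)
Definition diff_map (z : P * (P * V)) : 'rV[R]_(n * d + n * d) :=
  row_mx (z.1 - z.2.1) (z.1 - pack (fun=> z.2.2)).
Definition diff_body := diff_map @` diff_dom.

Lemma Kprod_compact : compact Kprod.
Proof.
apply: bounded_closed_compact.
  have : \forall M \near +oo, forall i, K i `<=` [set y : V | `|y| <= M].
    by apply: filter_forall => i; exact: compact_bounded.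
  apply: filterS => M KM Y KY; have M0 := le_trans (normr_ge0 _) (KM ord0 _ (KY ord0)).
  apply: norm_le_coord => // k; case/mxvec_indexP: k => i j.
  by rewrite -blk_coord; apply: le_trans (coord_le_norm _ _) (KM i _ (KY i)).
have -> : Kprod = \bigcap_(i in [set: 'I_n]) ((blk i) @^-1` K i).
  by apply/seteqP; split => Y /= KY i; [move=> _; exact: KY | exact: KY].
apply: closed_bigI => i _; apply: preimage_closed.
  by move=> Y _; apply: (continuous_blk (g := id)) => ?; exact: cvg_id.
by apply: compact_closed; [exact: norm_hausdorff | exact: K_compact].
Qed.

Lemma diff_map_continuous : continuous diff_map.
Proof.
have z21_cont : continuous (fun z : P * (P * V) => z.2.1).
  by move=> z; apply: (@continuous_comp _ _ _ snd fst); [exact: cvg_snd | exact: cvg_fst].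
have z22_cont : continuous (fun z : P * (P * V) => z.2.2).
  by move=> z; apply: (@continuous_comp _ _ _ snd snd); exact: cvg_snd.
apply: continuous_row_mx => z; apply: continuousB; try exact: cvg_fst.
  exact: z21_cont.
exact: (@continuous_pack_const R n d _ _ z22_cont).
Qed.

Lemma diff_body_compact : compact diff_body.
Proof.
apply: continuous_compact; first exact: continuous_subspaceT diff_map_continuous.
by apply: compact_setX; [|apply: compact_setX]; [exact: Kprod_compact.. | exact: K_compact].
Qed.

Lemma diff_body_convex : Defs.convex_set diff_body.
Proof.
move=> _ _ t [z1 [K1 [K1' K1w]] <-] [z2 [K2 [K2' K2w]] <-] t0 t1.
have Kprod_convex : Defs.convex_set Kprod.
  by move=> Y Z s KY KZ s0 s1 i; rewrite /blk !linearD !linearZ; apply: K_convex.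
exists (t *: z1.1 + (1 - t) *: z2.1,
        (t *: z1.2.1 + (1 - t) *: z2.2.1, t *: z1.2.2 + (1 - t) *: z2.2.2)).
  by split; [|split]; [exact: Kprod_convex.. | exact: K_convex].
rewrite /diff_map /= !scale_row_mx add_row_mx; congr row_mx.
  by apply/rowP => k; rewrite !mxE; ring.
by apply/rowP => k; case/mxvec_indexP: k => i j; rewrite !mxE !pack_coord !mxE; ring.
Qed.

Lemma diff_body0 : diff_body 0.
Proof.
exists (pack (fun=> x), (pack (fun=> x), x)); last by rewrite /diff_map /= subrr row_mx0.
by split; [|split] => // i; rewrite blk_pack.
Qed.

Section SmallDifferences.
Variable e : R.
Hypotheses (e_gt0 : 0 < e) (small : forall q, `|q| < e -> diff_body q).

Lemma K_contains_ball i : exists c r, 0 < r /\ forall w, `|w - c| < r -> K i w.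
Proof.
apply: (convex_ball_of_diff_ball (@K_convex i) e_gt0) => u ue.
have [z [Kz1 [Kz2 _]] /eq_row_mx [Ez _]] :
    diff_body (row_mx (pack (fun l => if l == i then u else 0)) 0).
  apply: small; apply: le_lt_trans ue; apply: norm_row_mx_le; last by rewrite normr0.
  by apply: norm_pack_le => // l; case: eqP; rewrite ?normr0.
exists (blk i z.1), (blk i z.2.1); split; [exact: Kz1 | exact: Kz2 |].
by have := congr1 (blk i) Ez; rewrite blkB blk_pack eqxx.
Qed.

Lemma bigcapK_contains_ball :
  exists c r, 0 < r /\ forall w, `|w - c| < r -> forall i, K i w.
Proof.
have /choice [c /choice [r cr]] := K_contains_ball.
pose r0 := \big[Num.min/1]_i r i.
have r0_gt0 : 0 < r0.
  by rewrite /r0; elim/big_ind: _ => // [a b a0 b0|i _]; [rewrite lt_min a0 b0 | case: (cr i)].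
have r0_le i : r0 <= r i by rewrite /r0 (bigD1 i) //= ge_min lexx.
pose S := \sum_l `|c l|.
have S_ge0 : 0 <= S by apply: sumr_ge0.
pose eps := e / (S + 1).
have eps_gt0 : 0 < eps by rewrite divr_gt0 ?ltr_wpDl.
have [z [Kz1 [_ _]] /eq_row_mx [_ Ez]] :
    diff_body (row_mx 0 (pack (fun l => - eps *: c l))).
  apply: small; apply: (@le_lt_trans _ _ (eps * S)); last first.
    by rewrite /eps mulrAC ltr_pdivrMr ?ltr_wpDl // ltr_pM2l // ltrDl.
  apply: norm_row_mx_le; first by rewrite normr0 mulr_ge0 // ltW.
  apply: norm_pack_le => [|l]; first by rewrite mulr_ge0 // ltW.
  rewrite normrZ normrN gtr0_norm //; apply: ler_wpM2l; first exact: ltW.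
  by rewrite /S (bigD1 l) //= lerDl sumr_ge0.
have yE l : blk l z.1 = z.2.2 - eps *: c l.
  by have := congr1 (blk l) Ez; rewrite blkB !blk_pack scaleNr => <-; rewrite addrCA subrr addr0.
pose t := eps / (1 + eps).
have eps1_gt0 : 0 < 1 + eps by rewrite addr_gt0.
have t_gt0 : 0 < t by rewrite divr_gt0.
have t_le1 : t <= 1 by rewrite ler_pdivrMr // mul1r lerDr ler01.
exists ((1 + eps)^-1 *: z.2.2), (t * r0); split; first by rewrite mulr_gt0.
move=> w wc i; have [_ ball_i] := cr i.
apply: (convex_ball_shrink (@K_convex i) (Kz1 i) ball_i t_gt0 t_le1).
suff -> : t *: c i + (1 - t) *: blk i z.1 = (1 + eps)^-1 *: z.2.2.
  by apply: (lt_le_trans wc); apply: ler_wpM2l; [exact: ltW | exact: r0_le].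
by rewrite (yE i); apply/rowP => j; rewrite !mxE /t; field; rewrite gt_eqF.
Qed.

End SmallDifferences.

Lemma diff_body_interior_affdim :
  nbhs (0 : 'rV[R]_(n * d + n * d)) diff_body -> (d <= affdim [set y | forall i, K i y])%N.
Proof.
move=> /nbhs_ballP [e /= e_gt0 e_ball].
have small q : `|q| < e -> diff_body q.
  by move=> qe; apply: e_ball; rewrite -ball_normE /= sub0r normrN.
have [c [r [r_gt0 ball_c]]] := bigcapK_contains_ball e_gt0 small.
exact: affdim_ball r_gt0 ball_c.
Qed.

Lemma diff_body_separation : (affdim [set y | forall i, K i y] < d)%N ->
  exists al be : 'I_n -> V, (exists i, al i != 0 \/ be i != 0) /\
    forall (y1 y2 : 'I_n -> V) w, (forall i, K i (y1 i)) -> (forall i, K i (y2 i)) ->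
      K ord0 w -> \sum_i (dotp (al i) (y1 i - y2 i) + dotp (be i) (y1 i - w)) <= 0.
Proof.
move=> dimK.
have [|A A_neq0 A_normal] := support_hyperplane diff_body_compact diff_body_convex diff_body0.
  by move/diff_body_interior_affdim; rewrite leqNgt dimK.
exists (fun i => blk i (lsubmx A)), (fun i => blk i (rsubmx A)); split.
  apply: contrapT => A0; move/eqP: A_neq0; apply.
  have l_eq0 : lsubmx A = 0.
    by apply: blk_inj => i; rewrite blk0; apply: contrapT => /eqP nz; apply: A0; exists i; left.
  have r_eq0 : rsubmx A = 0.
    by apply: blk_inj => i; rewrite blk0; apply: contrapT => /eqP nz; apply: A0; exists i; right.
  by rewrite -[A]hsubmxK l_eq0 r_eq0 row_mx0.
move=> y1 y2 w Ky1 Ky2 Kw.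
have Dz : diff_dom (pack y1, (pack y2, w)) by split; [|split] => // i; rewrite blk_pack.
have := A_normal _ (ex_intro2 _ _ _ Dz erefl).
rewrite dotp0r -{1}[A]hsubmxK dotp_row_mx !dotp_blk -big_split /=.
by under eq_bigr do rewrite !blkB !blk_pack.
Qed.

End DifferenceBody.

Lemma balanced_normals (R : realType) d n (K : 'I_n -> set 'rV[R]_d) x :
  (forall i, compact (K i)) -> (forall i, Defs.convex_set (K i)) -> (forall i, K i x) ->
  (affdim [set y | forall i, K i y] < d)%N ->
  exists vs : 'I_n -> seq 'rV[R]_d,
    [/\ forall i u, u \in vs i -> normal_cone (K i) x u,
        \sum_i \sum_(u <- vs i) u = 0
      & exists i0 v0, v0 \in vs i0 /\ v0 != 0].
Proof.
case: n K => [|m] K K_compact K_convex Kx dimK.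
  by move: dimK; rewrite ltnNge (@affdim_ball _ _ _ 0 1) // => w _ [].
have [al [be [[i0 al_be_neq0] sep]]] := diff_body_separation K_compact K_convex Kx dimK.
pose at_i (i : 'I_m.+1) (y : 'rV[R]_d) k := if k == i then y else x.
have K_at i y : K i y -> forall k, K k (at_i i y k).
  by move=> Ky k; rewrite /at_i; case: eqP => [->|].
have sum_at i (F : 'I_m.+1 -> R) : (forall k, k != i -> F k = 0) -> \sum_k F k = F i.
  by move=> F0; rewrite (bigD1 i) //= big1 ?addr0.
pose vs i := [:: - al i; al i + be i; if i == ord0 then - \sum_k be k else 0].
exists vs; split.
- move=> i u; rewrite !inE => /or3P [] /eqP -> y Ky.
  + have := sep _ _ x Kx (K_at i y Ky) (Kx ord0).
    rewrite (sum_at i) => [|k /negPf ki]; last by rewrite /at_i ki !subrr !dotp0r addr0.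
    by rewrite /at_i eqxx subrr dotp0r addr0 !dotpNl dotpBr lerN2 subr_le0.
  + have := sep _ _ x (K_at i y Ky) Kx (Kx ord0).
    rewrite (sum_at i) => [|k /negPf ki]; last by rewrite /at_i ki !subrr !dotp0r addr0.
    by rewrite /at_i eqxx -dotpDl dotpBr subr_le0.
  + case: eqP => [iE | _]; last by rewrite !dotp0l.
    rewrite iE in Ky.
    have := sep _ _ y Kx Kx Ky.
    under eq_bigr do rewrite subrr dotp0r add0r.
    by rewrite -dotp_suml !dotpNl dotpBr lerN2 subr_le0.
- rewrite (eq_bigr (fun i => be i + if i == ord0 then - \sum_k be k else 0)).
    by rewrite big_split /= -big_mkcond big_pred1_eq subrr.
  by move=> i _; rewrite !big_cons big_nil addr0 addrA addKr.
- case: al_be_neq0 => [al_neq0|be_neq0].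
    by exists i0, (- al i0); rewrite !inE eqxx oppr_eq0.
  have [al0|al_neq0] := eqVneq (al i0) 0.
    by exists i0, (al i0 + be i0); rewrite !inE eqxx orbT al0 add0r.
  by exists i0, (- al i0); rewrite !inE eqxx oppr_eq0.
Qed.

Theorem theorem2p19 (R : realType) (d n : nat) (K : 'I_n -> set 'rV[R]_d)
    (x : 'rV[R]_d) :
  (forall i, convex_body (K i)) ->
  (affdim [set y | forall i, K i y] < d)%N ->
  [set y | forall i, K i y] x ->
  (forall i, boundary (K i) x) ->
  exists H : 'I_n -> seq ('rV[R]_d * R),
    (forall i, H i != [::]) /\
    (forall i h, h \in H i -> supporting_halfspace (K i) x h) /\
    (affdim [set y | forall i h, h \in H i -> halfspace h y] < d)%N.
Proof.
move=> K_body dimK Kx K_bd.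
have K_compact i : compact (K i) by case: (K_body i) => _ [].
have K_convex i : Defs.convex_set (K i) by case: (K_body i) => _ [].
have [vs [vs_normal vs_sum0 [i0 [v0 [v0_in v0_neq0]]]]] :=
  balanced_normals K_compact K_convex Kx dimK.
have /choice [s s_normal] : forall i, exists s, s != 0 /\ normal_cone (K i) x s.
  move=> i; have [_ x_nint] := K_bd i.
  by have [s] := support_hyperplane (K_compact i) (K_convex i) (Kx i) x_nint; exists s.
exists (fun i => [seq (u, dotp u x) | u <- s i :: vs i & u != 0]); split; [|split].
- by move=> i; rewrite /= (proj1 (s_normal i)).
- move=> i h /mapP [u]; rewrite mem_filter inE => /andP [u0 /predU1P [->|u_in]] ->.
    by apply: supporting_halfspace_normal => //; case: (s_normal i).
  exact: supporting_halfspace_normal (vs_normal i u u_in).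
- apply: leq_ltn_trans (affdim_balanced_normals x vs_sum0 v0_in v0_neq0).
  apply: le_affdim => y Hy i u u_in; have [->|u0] := eqVneq u 0; first by rewrite !dotp0l.
  by apply: (Hy i (u, dotp u x)); rewrite map_f // mem_filter u0 inE u_in orbT.
Qed.
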